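(* Let $\succsim=(\succsim_i)_{i\in I}$ be a profile of marginal preferences and let $\mu\in\mathcal M$ be a matching. Then $\mu$ is unambiguously individually rational at $\succsim$ if and only if $\mu$ is component-wise individually rational at $\succsim$.
   Context: Setup. $I=\{1,\dots,n\}$ is a finite set of agents and $O$ a finite set of objects. Each agent $i$ is endowed with a nonempty set $\Omega_i\subseteq O$; the sets $\Omega_i$ are pairwise disjoint and $\bigcup_{i\in I}\Omega_i=O$. A matching is a map $\mu:I\to 2^O$ with $\mu(i)\cap\mu(j)=\emptyset$ for $i\neq j$ and $|\mu(i)|=|\Omega_i|$ for every $i$; $\mathcal M$ is the set of matchings, and $\Omega$ also denotes the endowment matching $i\mapsto\Omega_i$. Agent $i$'s consumption set is $\mathcal X_i=\{X\subseteq O:|X|=|\Omega_i|\}$; a preference of $i$ is a complete, transitive, reflexive relation $R_i$ on $\mathcal X_i$ with strict part $P_i$. A marginal preference of $i$ is a weak order $\succsim_i$ on $O$ (strict part $\succ_i$). $R_i$ is responsive to $\succsim_i$ if for all $o,p\in O$ and all $Q\in\mathcal X_i$ with $o\in Q$, $p\notin Q$: $Q\mathrel{R_i}(Q\setminus\{o\})\cup\{p\}$ iff $o\succsim_i p$. Given a profile $R$, $\mu$ is individually rational at $R$ if $\mu(i)\mathrel{R_i}\Omega_i$ for all $i$; $\mu'$ Pareto-improves $\mu$ if $\mu'(i)\mathrel{R_i}\mu(i)$ for all $i$ and $\mu'(i)\mathrel{P_i}\mu(i)$ for some $i$; $\mu$ is Pareto-efficient if no matching Pareto-improves it. Given a profile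 $\succsim$ of marginal preferences, $\mu$ is unambiguously individually rational if it is individually rational at every profile $R$ such that each $R_i$ is responsive to $\succsim_i$. The matching $\mu$ is component-wise individually rational at $\succsim$ if for every $i\in I$ and every $\omega\in\Omega_i$, $|\{o\in\mu(i):o\succsim_i\omega\}|\ \ge\ |\{o\in\Omega_i:o\succsim_i\omega\}|$. *)

From mathcomp Require Import all_boot.
Set Implicit Arguments. Unset Strict Implicit. Unset Printing Implicit Defensive.

Section Market.
Variables (I O : finType) (Omega : I -> {set O}).

Definition endowment : Prop :=
  (forall i, Omega i != set0) /\
  (forall i j, i != j -> [disjoint Omega i & Omega j]) /\
  (\bigcup_(i : I) Omega i = [set: O]).

Definition matching (mu : I -> {set O}) : Prop :=
  (forall i j, i != j -> [disjoint mu i & mu j]) /\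
  (forall i, #|mu i| = #|Omega i|).

Definition consumption (i : I) (X : {set O}) : Prop := #|X| = #|Omega i|.

Definition preference (i : I) (R : {set O} -> {set O} -> Prop) : Prop :=
  (forall X, consumption i X -> R X X) /\
  (forall X Y, consumption i X -> consumption i Y -> R X Y \/ R Y X) /\
  (forall X Y Z, consumption i X -> consumption i Y -> consumption i Z ->
     R X Y -> R Y Z -> R X Z).

Definition marginal_pref (m : rel O) : Prop :=
  (forall o, m o o) /\ (forall o p, m o p || m p o) /\
  (forall o p q, m o p -> m p q -> m o q).

Definition responsive (i : I) (R : {set O} -> {set O} -> Prop) (m : rel O) : Prop :=
  forall (o p : O) (Q : {set O}), consumption i Q -> o \in Q -> p \notin Q ->
    (R Q ((Q :\ o) :|: [set p]) <-> m o p).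

Definition indiv_rational (R : I -> {set O} -> {set O} -> Prop)
  (mu : I -> {set O}) : Prop :=
  forall i, R i (mu i) (Omega i).

Definition unamb_IR (m : I -> rel O) (mu : I -> {set O}) : Prop :=
  forall R : I -> {set O} -> {set O} -> Prop,
    (forall i, preference i (R i) /\ responsive i (R i) (m i)) ->
    indiv_rational R mu.

Definition componentwise_IR (m : I -> rel O) (mu : I -> {set O}) : Prop :=
  forall i, forall w, w \in Omega i ->
    #|[set o in mu i | m i o w]| >= #|[set o in Omega i | m i o w]|.

End Market.

From mathcomp Require Import all_boot zify.
Set Implicit Arguments. Unset Strict Implicit. Unset Printing Implicit Defensive.

(* Rank objects by the number of objects they weakly beat.  Component-wise
   individual rationality says that, for every threshold w, the bundle mu i
   has at least as many objects ranked at least w as Omega i.  Given this,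
   Omega i is reached from mu i by finitely many single exchanges, each of
   which a responsive preference weakly dislikes (swap the best object of
   Omega i \ mu i for an object of mu i \ Omega i above it).  Conversely, if
   the count fails at some w, the additive preference with utility
   rank o + K [o >= w], for K larger than any sum of ranks, is responsive
   and strictly prefers Omega i to mu i. *)

Section Exchange.
Variable T : finType.
Implicit Types (X : {set T}) (x y : T).

Lemma cards_exchange X x y :
  x \in X -> y \notin X -> #|X :\ x :|: [set y]| = #|X|.
Proof.
move=> xX yX.
by rewrite setUC cardsU1 !inE negb_and yX orbT [in RHS](cardsD1 x X) xX.
Qed.

Lemma exchangeK X x y :
  x \in X -> y \notin X -> (X :\ x :|: [set y]) :\ y :|: [set x] = X.
Proof.
move=> xX yX; apply/setP => z; rewrite !inE.
case: (z =P x) => [->|_]; first by rewrite orbT.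
by case: (z =P y) => [->|_] /=; rewrite ?(negbTE yX) ?orbF.
Qed.

Lemma big_exchange (F : T -> nat) X x y : x \in X -> y \notin X ->
  \sum_(z in X :\ x :|: [set y]) F z + F x = \sum_(z in X) F z + F y.
Proof.
move=> xX yX; rewrite setUC big_setU1 /=; last by rewrite !inE negb_and yX orbT.
rewrite [in RHS](big_setD1 _ xX) /=; lia.
Qed.

End Exchange.

Section WeakOrder.
Variables (O : finType) (m : rel O).
Hypothesis m_pref : marginal_pref m.
Implicit Types (Q X Y Z : {set O}) (o p w : O).

Let m_refl : reflexive m. Proof. by case: m_pref. Qed.
Let m_total : total m. Proof. by case: m_pref => _ []. Qed.
Let m_trans : transitive m.
Proof. by case: m_pref => _ [_ m_tr] y x z; apply: m_tr. Qed.

Definition rank o := #|[set q | m o q]|.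

Lemma leq_rank o p : (rank p <= rank o) = m o p.
Proof.
case op: (m o p).
  by apply/subset_leq_card/subsetP => q; rewrite !inE; apply: m_trans.
have po : m p o by move: (m_total o p); rewrite op.
apply/negbTE; rewrite -ltnNge; apply/proper_card/properP; split.
  by apply/subsetP => q; rewrite !inE; apply: m_trans.
by exists p; rewrite !inE ?op ?m_refl.
Qed.

Definition count_above (X : {set O}) w := #|[set o in X | m o w]|.

Lemma count_aboveE X w : count_above X w = \sum_(o in X) m o w.
Proof.
rewrite /count_above -sum1_card big_mkcond [RHS]big_mkcond /=.
by apply: eq_bigr => o _; rewrite !inE; case: (o \in X); case: (m o w).
Qed.

Definition dominates (Y X : {set O}) :=
  forall w, count_above X w <= count_above Y w.

(* For an arbitrary threshold w, the objects of X ranked at least w are those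
   ranked at least the lowest of them, which is an element of X. *)
Lemma dominatesP X Y :
  (forall w, w \in X -> count_above X w <= count_above Y w) -> dominates Y X.
Proof.
move=> domX w; have [above0|[o0 o0_above]] := set_0Vmem [set o in X | m o w].
  by rewrite /count_above above0 cards0.
case: (arg_minnP rank o0_above) => w' w'_above w'min.
have /[!inE] /andP[w'X w'w] : w' \in [set o in X | m o w] := w'_above.
have {}w'min : {in [set o in X | m o w], forall o, rank w' <= rank o} := w'min.
have same_above : [set o in X | m o w] = [set o in X | m o w'].
  apply/setP => o; rewrite !inE; case oX: (o \in X) => //=.
  apply/idP/idP => [ow|ow']; last exact: m_trans w'w.
  by rewrite -leq_rank; apply: w'min; rewrite inE oX.
rewrite /count_above same_above; apply: leq_trans (domX _ w'X) _.
by apply/subset_leq_card/subsetP => o /[!inE] /andP[-> /m_trans]; apply.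
Qed.

Lemma dominates_exchange_exists X Y x :
  dominates Y X -> x \in X :\: Y -> exists2 y, y \in Y :\: X & m y x.
Proof.
move=> dom /[!inE] /andP[xY xX].
case: (pickP [pred y | (y \in Y :\: X) && m y x]) => [y /andP[]|none].
  by exists y.
have above_sub : [set o in Y | m o x] \subset [set o in X | m o x] :\ x.
  apply/subsetP => o /[!inE] /andP[oY ox]; rewrite ox andbT.
  move: (none o); rewrite /= !inE oY ox !andbT => /negbFE ->.
  by rewrite andbT; apply: contraNneq xY => <-.
have := subset_leq_card above_sub; have := dom x.
rewrite /count_above [#|[set o in X | m o x]|](cardsD1 x) !inE xX m_refl.
lia.
Qed.

(* Exchanging the top object of X \ Y for any object of Y \ X can only lose
   for thresholds w above x, and there every object of X ranked at least w
   already lies in Y. *)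
Lemma dominates_exchange X Y x y : dominates Y X -> x \in X :\: Y ->
  {in X :\: Y, forall z, rank z <= rank x} -> y \in Y :\: X ->
  dominates Y (X :\ x :|: [set y]).
Proof.
move=> dom xD xmax /[dup] yD /[!inE] /andP[yX yY] w.
move: (xD); rewrite inE => /andP[_ xX].
have := big_exchange (fun o => m o w : nat) xX yX; rewrite -!count_aboveE.
have := dom w; case yw: (m y w); case xw: (m x w) => /=; try lia.
have above_sub : [set o in X | m o w] \subset [set o in Y | m o w] :\ y.
  apply/subsetP => o /[!inE] /andP[oX ow]; rewrite ow andbT.
  case oY: (o \in Y); last first.
    have /xmax : o \in X :\: Y by rewrite inE oY oX.
    by rewrite leq_rank => /m_trans /(_ ow); rewrite xw.
  by rewrite andbT; apply: contraTneq oX => ->.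
have := subset_leq_card above_sub.
by rewrite /count_above (cardsD1 y [set o in Y | m o w]) !inE yY yw; lia.
Qed.

Section Responsive.
Variables (n : nat) (R : {set O} -> {set O} -> Prop).
Hypothesis R_refl : forall X, #|X| = n -> R X X.
Hypothesis R_trans : forall X Y Z, #|X| = n -> #|Y| = n -> #|Z| = n ->
  R X Y -> R Y Z -> R X Z.
Hypothesis R_resp : forall o p Q, #|Q| = n -> o \in Q -> p \notin Q ->
  (R Q (Q :\ o :|: [set p]) <-> m o p).

Lemma dominates_pref X Y : #|X| = n -> #|Y| = n -> dominates Y X -> R Y X.
Proof.
move=> + YN; move card_diff: #|X :\: Y| => k.
elim: k X card_diff => [|k IH] X card_diff XN dom.
  suff -> : X = Y by apply: R_refl.
  by apply/eqP; rewrite eqEcard XN YN leqnn -setD_eq0 -cards_eq0 card_diff.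
have [x0 x0D] : exists x0, x0 \in X :\: Y.
  by apply/set0Pn; rewrite -cards_eq0 card_diff.
case: (arg_maxnP rank x0D) => x xD' xmax'.
have xD : x \in X :\: Y := xD'.
have xmax : {in X :\: Y, forall z, rank z <= rank x} := xmax'.
have [y yD yx] := dominates_exchange_exists dom xD.
move: (xD) (yD); rewrite !inE => /andP[xY xX] /andP[yX yY].
set X' := X :\ x :|: [set y].
have X'N : #|X'| = n by rewrite cards_exchange.
have yX' : y \in X' by rewrite !inE eqxx orbT.
have xX' : x \notin X' by rewrite !inE eqxx /=; apply: contraNneq yX => <-.
have RX'X : R X' X.
  by rewrite -[in R _ X](exchangeK xX yX); apply/(R_resp X'N yX' xX').
have X'k : #|X' :\: Y| = k.
  suff -> : X' :\: Y = (X :\: Y) :\ x.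
    by move: card_diff; rewrite (cardsD1 x) xD => -[].
  apply/setP => z; rewrite !inE.
  case: (z =P y) => [->|_]; first by rewrite yY andbF.
  by rewrite orbF andbCA.
apply: (R_trans YN X'N XN) RX'X.
exact: IH X'k X'N (dominates_exchange dom xD xmax yD).
Qed.

End Responsive.

Definition utility w K o := rank o + m o w * K.

Lemma leq_utility w K o p : (utility w K p <= utility w K o) = m o p.
Proof.
have [le_rank|lt_rank] := leqP (rank p) (rank o).
  have op : m o p by rewrite -leq_rank.
  rewrite op; apply: leq_add le_rank _; rewrite leq_mul2r.
  by case pw: (m p w); rewrite ?(m_trans op pw) ?orbT.
have po : m p o by rewrite -leq_rank ltnW.
have ow_le : m o w * K <= m p w * K.
  by rewrite leq_mul2r; case ow: (m o w); rewrite ?(m_trans po ow) ?orbT.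
have -> : m o p = false by rewrite -leq_rank leqNgt lt_rank.
by apply/negbTE; rewrite -ltnNge /utility; lia.
Qed.

(* Weight exceeding any sum of ranks makes count_above decisive. *)
Lemma count_above_lt_sum_utility w X Y :
  count_above X w < count_above Y w ->
  \sum_(o in X) utility w (#|O| * #|O|).+1 o <
  \sum_(o in Y) utility w (#|O| * #|O|).+1 o.
Proof.
have sum_utilityE Z K : \sum_(o in Z) utility w K o =
    \sum_(o in Z) rank o + count_above Z w * K.
  by rewrite big_split /= count_aboveE big_distrl.
have sum_rank_le Z : \sum_(o in Z) rank o <= #|O| * #|O|.
  apply: (@leq_trans (\sum_(o in Z) #|O|)).
    by apply: leq_sum => o _; apply: max_card.
  by rewrite sum_nat_const leq_mul2r max_card orbT.
move: (sum_rank_le X) (sum_rank_le Y); rewrite !sum_utilityE; nia.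
Qed.

End WeakOrder.

Definition sum_pref (O : finType) (u : O -> nat) (X Y : {set O}) : Prop :=
  \sum_(o in Y) u o <= \sum_(o in X) u o.

Lemma sum_pref_preference (I O : finType) (Omega : I -> {set O}) i u :
  preference Omega i (sum_pref u).
Proof.
rewrite /sum_pref; split; [|split] => [X _ //|X Y _ _|X Y Z _ _ _]; last lia.
by case/orP: (leq_total (\sum_(o in Y) u o) (\sum_(o in X) u o)); [left|right].
Qed.

Lemma sum_pref_responsive (I O : finType) (Omega : I -> {set O}) i u m :
  (forall o p, (u p <= u o) = m o p) -> responsive Omega i (sum_pref u) m.
Proof.
move=> leq_u o p Q _ oQ pQ; rewrite /sum_pref -leq_u.
by have := big_exchange u oQ pQ; lia.
Qed.

Theorem proposition1 (I O : finType) (Omega : I -> {set O})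
  (m : I -> rel O) (mu : I -> {set O}) :
  endowment Omega ->
  (forall i, marginal_pref (m i)) ->
  matching Omega mu ->
  (unamb_IR Omega m mu <-> componentwise_IR Omega m mu).
Proof.
move=> _ m_pref [_ mu_card]; split.
- move=> uIR i w _; rewrite leqNgt; apply/negP => lt_count.
  pose R j := sum_pref (utility (m j) w (#|O| * #|O|).+1).
  have R_ok j : preference Omega j (R j) /\ responsive Omega j (R j) (m j).
    split; first exact: sum_pref_preference.
    exact/sum_pref_responsive/leq_utility.
  have := uIR R R_ok i; rewrite /R /sum_pref leqNgt.
  by rewrite (count_above_lt_sum_utility lt_count).
- move=> cwIR R R_ok i; have [[R_refl [_ R_trans]] R_resp] := R_ok i.
  apply: (dominates_pref (m_pref i) R_refl R_trans R_resp) => //.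
  exact/dominatesP/cwIR.
Qed.
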